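(* Fix reals $0<\varepsilon<1$ and $c\ge 12/\varepsilon$, and let $S$ be a set produced by the construction described in the context (with any choices allowed there). Then for all integers $m<n$ with $n$ sufficiently large and $Q_m$ defined, the number of collinear triples consisting of two points of $S\cap Q_m$ and one lattice point of $Q_n$ is at most $$\frac{8\cdot2^{m+n}}{c^{3}n^{2+2\varepsilon}m^{1+\varepsilon}}\cdot n.$$
   Context: Construction. Fix $0<\varepsilon<1$ and $c\ge 12/\varepsilon$. For each sufficiently large integer $n$ (say $n\ge n_0$), let $s_n=\left\lfloor\frac{2^n}{cn^{1+\varepsilon}}\right\rfloor$, $Y_n=\left\lfloor\frac{2^n}{n^{\varepsilon}}\right\rfloor$, and let $Q_n=[2^n,2^n+s_n]\times[Y_n-s_n,Y_n]$ be the axis-parallel square with side $s_n$ and top left corner $(2^n,Y_n)$. Let $p_n$ be the largest prime smaller than $s_n$. For integers $a,b$, let $\mathcal{P}_n(a,b)=\{(2^n+x,\;Y_n-y): x,y\in\{0,\dots,p_n-1\},\ y\equiv (x-a)^2+b \pmod{p_n}\}$, a translated copy of the modular parabola $y=(x-a)^2+b \bmod p_n$ in $Q_n$. The set $S\subseteq\mathbb{Z}^2$ is built iteratively for $n=n_0,n_0+1,\dots$: given the already selected points $S_{<n}=S\cap\bigcup_{m<n}Q_m$, choose parameters $(a_n,b_n)\in\{0,\dots,p_n-1\}^2$ minimizing the number of collinear triples formed by points of $\mathcal{P}_n(a_n,b_n)\cup S_{<n}$ that contain points of both $\mathcal{P}_n(a_n,b_n)$ and $S_{<n}$; delete from $\mathcal{P}_n=\mathcal{P}_n(a_n,b_n)$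 one point of each such triple, and add the remaining points of $\mathcal{P}_n$ to $S$. Thus $S\cap Q_n\subseteq\mathcal{P}_n$. *)

From Stdlib Require Import Reals ZArith List Znumtheory.

Set Implicit Arguments.

Definition pt := (Z * Z)%type.

(* floor of a real number: Int_part r = up r - 1 = floor r *)
Definition s_ (eps c : R) (n : nat) : Z :=
  Int_part (2 ^ n / (c * Rpower (INR n) (1 + eps)))%R.
Definition Y_ (eps : R) (n : nat) : Z :=
  Int_part (2 ^ n / Rpower (INR n) eps)%R.

Definition inQ (eps c : R) (n : nat) (z : pt) : Prop :=
  let X := (2 ^ Z.of_nat n)%Z in
  (X <= fst z <= X + s_ eps c n)%Z /\
  (Y_ eps n - s_ eps c n <= snd z <= Y_ eps n)%Z.

Definition largest_prime_below (p s : Z) : Prop :=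
  prime p /\ (p < s)%Z /\ forall q, prime q -> (q < s)%Z -> (q <= p)%Z.

Definition inP (eps c : R) (n : nat) (p a b : Z) (z : pt) : Prop :=
  exists x : Z, (0 <= x < p)%Z /\
    z = ((2 ^ Z.of_nat n + x)%Z,
         (Y_ eps n - (((x - a) ^ 2 + b) mod p))%Z).

Definition collinear (u v w : pt) : Prop :=
  ((fst v - fst u) * (snd w - snd u) - (snd v - snd u) * (fst w - fst u) = 0)%Z.

(* strict lexicographic order on Z^2, used to represent an unordered set of
   distinct points canonically as an increasing tuple *)
Definition ltlex (u v : pt) : Prop :=
  (fst u < fst v)%Z \/ (fst u = fst v /\ (snd u < snd v)%Z).

Definition card_is (T : Type) (A : T -> Prop) (k : nat) : Prop :=
  exists l : list T, NoDup l /\ (forall x, In x l <-> A x) /\ length l = k.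

Definition S_lt (eps c : R) (n0 : nat) (S : pt -> Prop) (n : nat) (z : pt) : Prop :=
  S z /\ exists m, (n0 <= m)%nat /\ (m < n)%nat /\ inQ eps c m z.

Definition mixed_triple (eps c : R) (n0 : nat) (S : pt -> Prop) (n : nat)
    (p a b : Z) (t : pt * pt * pt) : Prop :=
  match t with
  | (u, v, w) =>
      let P := inP eps c n p a b in
      let L := S_lt eps c n0 S n in
      ltlex u v /\ ltlex v w /\ collinear u v w /\
      (P u \/ L u) /\ (P v \/ L v) /\ (P w \/ L w) /\
      (P u \/ P v \/ P w) /\ (L u \/ L v \/ L w)
  end.

Definition in_triple (z : pt) (t : pt * pt * pt) : Prop :=
  match t with (u, v, w) => z = u \/ z = v \/ z = w end.

(* S is a set produced by the construction started at n0 (with any allowed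
   choices of minimizing parameters and of deleted points) *)
Definition construction (eps c : R) (n0 : nat) (S : pt -> Prop) : Prop :=
  (forall z, S z -> exists n, (n0 <= n)%nat /\ inQ eps c n z) /\
  forall n : nat, (n0 <= n)%nat ->
    exists p a b : Z,
      largest_prime_below p (s_ eps c n) /\
      (0 <= a < p)%Z /\ (0 <= b < p)%Z /\
      (exists k, card_is (mixed_triple eps c n0 S n p a b) k /\
         forall a' b' k', (0 <= a' < p)%Z -> (0 <= b' < p)%Z ->
           card_is (mixed_triple eps c n0 S n p a' b') k' -> (k <= k')%nat) /\
      exists f : pt * pt * pt -> pt,
        (forall t, mixed_triple eps c n0 S n p a b t ->
            in_triple (f t) t /\ inP eps c n p a b (f t)) /\
        (forall z, inQ eps c n z ->
            (S z <-> (inP eps c n p a b z /\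
                      ~ exists t, mixed_triple eps c n0 S n p a b t /\ f t = z))).

(* collinear triples made of two (distinct) points of S ∩ Q_m and one lattice
   point of Q_n; the pair is represented with u < v lexicographically *)
Definition pair_triple (eps c : R) (S : pt -> Prop) (m n : nat)
    (t : pt * pt * pt) : Prop :=
  match t with
  | (u, v, w) =>
      ltlex u v /\ S u /\ inQ eps c m u /\ S v /\ inQ eps c m v /\
      inQ eps c n w /\ collinear u v w
  end.

(* Points of [S] in [Q_m] lie on the modular parabola [P_m].  For a triple [(u, v, w)] write
   [v - u = g (a, b)] with [(a, b)] primitive and [w - u = k (a, b)].  Differences of a modular
   parabola determine their base point (a Sidon property), so [(b, a, g, k)] determines the
   triple.  As [w - u] is about [(2^n, 2^n / n^eps)], [a] is about [b n^eps], there are at most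
   [p/a] choices of [g] and about [s_n / a] of [k]; summing over [b <= p < 2^m] gives the
   harmonic sum, at most [1 + m log 2 <= n], times [s_m s_n / (c n^eps)]. *)

From Stdlib Require Import Reals ZArith List Znumtheory Lia Lra Psatz ClassicalEpsilon.

Open Scope Z_scope.

Lemma card_is_of_incl {T : Type} (eq_dec : forall x y : T, {x = y} + {x <> y})
    (A : T -> Prop) (l : list T) :
  (forall x, A x -> In x l) -> exists k, card_is A k.
Proof.
  intros Hl.
  set (inA := fun x => if excluded_middle_informative (A x) then true else false).
  exists (length (nodup eq_dec (filter inA l))), (nodup eq_dec (filter inA l)).
  split; [apply NoDup_nodup|split; [|reflexivity]].
  intros x; rewrite nodup_In, filter_In; unfold inA.
  destruct (excluded_middle_informative (A x)); split; intuition; discriminate.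
Qed.

Lemma card_is_le_length {T U : Type} {A : T -> Prop} {k : nat} (f : T -> U) (l : list U) :
  card_is A k -> (forall x, A x -> In (f x) l) ->
  (forall x y, A x -> A y -> f x = f y -> x = y) -> (k <= length l)%nat.
Proof.
  intros [lA [Hnd [HlA <-]]] Hf Hinj.
  rewrite <- (length_map f lA). apply NoDup_incl_length.
  - apply NoDup_map_NoDup_ForallPairs; auto.
    intros x y Hx Hy; apply Hinj; apply HlA; auto.
  - intros y Hy. apply in_map_iff in Hy as [x [<- Hx]]. apply Hf, HlA, Hx.
Qed.

Definition Zrange (lo hi : Z) : list Z :=
  map (fun i => lo + Z.of_nat i) (seq 0 (Z.to_nat (hi - lo + 1))).

Lemma In_Zrange lo hi x : In x (Zrange lo hi) <-> lo <= x <= hi.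
Proof.
  unfold Zrange; rewrite in_map_iff; split.
  - intros [i [<- Hi]]. apply in_seq in Hi. lia.
  - intros Hx. exists (Z.to_nat (x - lo)). rewrite in_seq. lia.
Qed.

Lemma length_Zrange lo hi : length (Zrange lo hi) = Z.to_nat (hi - lo + 1).
Proof. unfold Zrange. now rewrite length_map, length_seq. Qed.

(** * Modular parabolas and collinear triples *)

Definition parabola_mod (p a b x : Z) : Z := ((x - a) ^ 2 + b) mod p.

Definition parabola_point (X0 Y0 p a b x : Z) : pt := (X0 + x, Y0 - parabola_mod p a b x).

Definition on_parabola (X0 Y0 p a b : Z) (z : pt) : Prop :=
  exists x, 0 <= x < p /\ z = parabola_point X0 Y0 p a b x.

(* [f (x + D) - f x = 2 D (x - a) + D^2 (mod p)], and [2 D] is invertible mod the odd prime [p > D]. *)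
Lemma parabola_mod_sidon p a b x1 y1 x2 y2 : prime p -> 3 <= p ->
  0 <= x1 < p -> 0 <= y1 < p -> 0 <= x2 < p -> 0 <= y2 < p ->
  0 < y1 - x1 -> y1 - x1 = y2 - x2 ->
  parabola_mod p a b y1 - parabola_mod p a b x1 =
  parabola_mod p a b y2 - parabola_mod p a b x2 -> x1 = x2.
Proof.
  intros Hp Hp3 Hx1 Hy1 Hx2 Hy2 HD HD12 Hf. unfold parabola_mod in Hf.
  rewrite !Z.mod_eq in Hf by lia.
  set (D := y1 - x1) in *.
  replace y1 with (x1 + D) in Hf by lia. replace y2 with (x2 + D) in Hf by lia.
  set (q1 := ((x1 - a) ^ 2 + b) / p) in Hf. set (q2 := ((x1 + D - a) ^ 2 + b) / p) in Hf.
  set (q3 := ((x2 - a) ^ 2 + b) / p) in Hf. set (q4 := ((x2 + D - a) ^ 2 + b) / p) in Hf.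
  assert (Hdiv : (p | 2 * D * (x2 - x1))).
  { exists (q1 - q2 - q3 + q4). clearbody q1 q2 q3 q4 D. ring_simplify in Hf. ring_simplify. lia. }
  apply prime_mult in Hdiv as [Hdiv|[q Hq]]; auto.
  - apply prime_mult in Hdiv as [Hdiv|Hdiv]; auto; apply Z.divide_pos_le in Hdiv; lia.
  - destruct (Z.lt_trichotomy q 0) as [Hq0|[Hq0|Hq0]]; [|lia|].
    + assert (q * p <= -1 * p) by (apply Z.mul_le_mono_nonneg_r; lia). lia.
    + assert (1 * p <= q * p) by (apply Z.mul_le_mono_nonneg_r; lia). lia.
Qed.

Lemma primitive_decomposition Dx Dy Wx Wy :
  0 < Dx -> 0 < Wx -> 0 < Wy -> Dx * Wy = Dy * Wx ->
  let g := Z.gcd Dx Dy in let a := Dx / g in let b := Dy / g in let k := Wx / a in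
  0 < g /\ 0 < a /\ 0 < b /\ 0 < k /\ Dx = g * a /\ Dy = g * b /\ Wx = k * a /\ Wy = k * b.
Proof.
  intros HDx HWx HWy Hcol g a b k.
  assert (Hg : 0 < g).
  { pose proof (Z.gcd_nonneg Dx Dy). enough (g <> 0) by lia.
    intros H0. apply Z.gcd_eq_0_l in H0. lia. }
  assert (Hexact : forall x, (g | x) -> x = g * (x / g)).
  { intros x Hx. apply Z.div_exact; [lia|]. apply Z.mod_divide; [lia|exact Hx]. }
  assert (Hga : Dx = g * a) by (apply Hexact, Z.gcd_divide_l).
  assert (Hgb : Dy = g * b) by (apply Hexact, Z.gcd_divide_r).
  assert (Ha : 0 < a) by nia.
  assert (Hab : a * Wy = b * Wx) by (apply (Z.mul_reg_l _ _ g); lia).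
  assert (Hak : Wx = a * k).
  { apply Z.div_exact; [lia|]. apply Z.mod_divide; [lia|].
    apply Z.gauss with b; [rewrite <- Hab; apply Z.divide_factor_l|].
    apply Z.gcd_div_gcd; [lia|reflexivity]. }
  assert (Hbk : Wy = k * b) by (apply (Z.mul_reg_l _ _ a); lia).
  repeat split; nia.
Qed.

Definition cdiv (x d : Z) : Z := (x + d - 1) / d.

Lemma cdiv_le x d a : 0 < d -> x <= a * d -> cdiv x d <= a.
Proof.
  intros Hd Hx. unfold cdiv.
  enough ((x + d - 1) / d < a + 1) by lia. apply Z.div_lt_upper_bound; lia.
Qed.

(* A triple [(u, v, w)] with [v - u = g (a, b)], [(a, b)] primitive, and [w - u = k (a, b)]
   is coded by [((b, a), (g, k))]. *)
Definition triple_code (t : pt * pt * pt) : (Z * Z) * (Z * Z) :=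
  let '(u, v, w) := t in
  let g := Z.gcd (fst v - fst u) (snd v - snd u) in
  let a := (fst v - fst u) / g in
  (((snd v - snd u) / g, a), (g, (fst w - fst u) / a)).

Definition codes_with_slope (p L1 U1 b a : Z) : list ((Z * Z) * (Z * Z)) :=
  map (fun gk => ((b, a), gk)) (list_prod (Zrange 1 ((p - 1) / a)) (Zrange (cdiv L1 a) (U1 / a))).

Definition codes_with_b (p L1 U1 L2 U2 b : Z) : list ((Z * Z) * (Z * Z)) :=
  flat_map (codes_with_slope p L1 U1 b) (Zrange (cdiv (b * L1) U2) (b * U1 / L2)).

Definition code_range (p L1 U1 L2 U2 : Z) : list ((Z * Z) * (Z * Z)) :=
  flat_map (fun nb => codes_with_b p L1 U1 L2 U2 (Z.of_nat nb))
    (seq 1 (Z.to_nat ((p - 1) * U2 / L1))).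

Lemma In_code_range p L1 U1 L2 U2 a b g k : 0 < L1 -> 0 < L2 ->
  0 < a -> 0 < b -> 0 < g -> g * a <= p - 1 ->
  L1 <= k * a <= U1 -> L2 <= k * b <= U2 ->
  In ((b, a), (g, k)) (code_range p L1 U1 L2 U2).
Proof.
  intros HL1 HL2 Ha Hb Hg Hga Hka Hkb.
  assert (Hk : 0 < k) by nia.
  assert (HbL1 : b * L1 <= a * U2).
  { transitivity (b * (k * a)); [apply Z.mul_le_mono_nonneg_l; lia|].
    transitivity (a * (k * b)); [lia|apply Z.mul_le_mono_nonneg_l; lia]. }
  assert (HaL2 : a * L2 <= b * U1).
  { transitivity (a * (k * b)); [apply Z.mul_le_mono_nonneg_l; lia|].
    transitivity (b * (k * a)); [lia|apply Z.mul_le_mono_nonneg_l; lia]. }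
  unfold code_range. apply in_flat_map. exists (Z.to_nat b). rewrite Z2Nat.id by lia. split.
  { apply in_seq. enough (b <= (p - 1) * U2 / L1) by lia.
    apply Z.div_le_lower_bound; [lia|].
    assert (a * U2 <= (p - 1) * U2) by (apply Z.mul_le_mono_nonneg_r; nia). lia. }
  apply in_flat_map. exists a. split.
  { apply In_Zrange. split; [apply cdiv_le; lia|apply Z.div_le_lower_bound; lia]. }
  unfold codes_with_slope. apply in_map_iff. exists (g, k). split; [reflexivity|].
  apply in_prod_iff. rewrite !In_Zrange. split; split; try lia.
  - apply Z.div_le_lower_bound; lia.
  - apply cdiv_le; lia.
  - apply Z.div_le_lower_bound; lia.
Qed.

Definition parabola_box_triple (X0 Y0 p a b Xlo Xhi Ylo Yhi : Z) (t : pt * pt * pt) : Prop :=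
  let '(u, v, w) := t in
  ltlex u v /\ on_parabola X0 Y0 p a b u /\ on_parabola X0 Y0 p a b v /\
  (Xlo <= fst w <= Xhi /\ Ylo <= snd w <= Yhi) /\ collinear u v w.

Section ParabolaBoxTriples.

Variables X0 Y0 p a b Xlo Xhi Ylo Yhi : Z.
Hypothesis p_prime : prime p.
Hypothesis p_ge3 : 3 <= p.
Hypothesis box_right : 0 < Xlo - X0 - (p - 1).
Hypothesis box_above : 0 < Ylo - Y0.

Let triple := parabola_box_triple X0 Y0 p a b Xlo Xhi Ylo Yhi.

Lemma parabola_box_triple_code {u v w b' a' g k} :
  triple (u, v, w) -> triple_code (u, v, w) = ((b', a'), (g, k)) ->
  exists x y, 0 <= x < y /\ y < p /\
    u = parabola_point X0 Y0 p a b x /\ v = parabola_point X0 Y0 p a b y /\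
    0 < g /\ 0 < a' /\ 0 < b' /\ y - x = g * a' /\
    parabola_mod p a b x - parabola_mod p a b y = g * b' /\
    fst w = fst u + k * a' /\ snd w = snd u + k * b'.
Proof.
  intros (Hlt & [x [Hx ->]] & [y [Hy ->]] & Hw & Hcol) Hcode.
  assert (Hf : forall z, 0 <= parabola_mod p a b z < p) by (intros; apply Z.mod_pos_bound; lia).
  unfold parabola_point, ltlex, collinear, triple_code in *; simpl in *.
  pose proof (Hf x); pose proof (Hf y).
  assert (Hxy : x < y).
  { destruct Hlt as [Hlt|[Heq Hlt]]; [lia|]. assert (x = y) by lia. subst. lia. }
  destruct (primitive_decomposition (X0 + y - (X0 + x))
              (Y0 - parabola_mod p a b y - (Y0 - parabola_mod p a b x))
              (fst w - (X0 + x)) (snd w - (Y0 - parabola_mod p a b x))) as (Hg & Ha & Hb & _ & HDx & HDy & HWx & HWy);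
    [lia|lia|lia|lia|].
  injection Hcode as <- <- <- <-.
  exists x, y. repeat split; lia.
Qed.

Lemma parabola_box_triples_card_le (T : pt * pt * pt -> Prop) :
  (forall t, T t -> triple t) ->
  exists k, card_is T k /\
    (k <= length (code_range p (Xlo - X0 - (p - 1)) (Xhi - X0) (Ylo - Y0) (Yhi - Y0 + (p - 1))))%nat.
Proof.
  intros HT.
  set (P := map (parabola_point X0 Y0 p a b) (Zrange 0 (p - 1))).
  assert (HP : forall z, on_parabola X0 Y0 p a b z -> In z P).
  { intros z [x [Hx ->]]. apply in_map. apply In_Zrange. lia. }
  assert (Hdec : forall t t' : pt * pt * pt, {t = t'} + {t <> t'})
    by (repeat decide equality; apply Z.eq_dec).
  destruct (card_is_of_incl Hdec T (list_prod (list_prod P P)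
              (list_prod (Zrange Xlo Xhi) (Zrange Ylo Yhi)))) as [n Hn].
  { intros [[u v] [w1 w2]] Ht. destruct (HT _ Ht) as (_ & Hu & Hv & Hw & _).
    simpl in Hw. repeat apply in_prod; auto; apply In_Zrange; lia. }
  exists n. split; [exact Hn|].
  assert (Hf : forall z, 0 <= parabola_mod p a b z < p) by (intros; apply Z.mod_pos_bound; lia).
  apply (card_is_le_length triple_code _ Hn).
  - intros [[u v] w] Ht. destruct (triple_code (u, v, w)) as [[b' a'] [g k]] eqn:Hcode.
    pose proof (HT _ Ht) as Ht'. destruct Ht' as (_ & _ & _ & Hw & _).
    destruct (parabola_box_triple_code (HT _ Ht) Hcode)
      as (x & y & Hxy & Hyp & -> & -> & Hg & Ha & Hb & HD & Hfd & Hwx & Hwy).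
    unfold parabola_point in *; simpl in *. pose proof (Hf x).
    apply In_code_range; lia.
  - intros [[u1 v1] w1] [[u2 v2] w2] Ht1 Ht2 Hcode.
    destruct (triple_code (u2, v2, w2)) as [[b' a'] [g k]] eqn:Hcode2.
    destruct (parabola_box_triple_code (HT _ Ht1) Hcode)
      as (x1 & y1 & Hxy1 & Hyp1 & -> & -> & _ & _ & _ & HD1 & Hfd1 & Hwx1 & Hwy1).
    destruct (parabola_box_triple_code (HT _ Ht2) Hcode2)
      as (x2 & y2 & Hxy2 & Hyp2 & -> & -> & _ & _ & _ & HD2 & Hfd2 & Hwx2 & Hwy2).
    assert (x1 = x2) by (apply (parabola_mod_sidon p a b x1 y1 x2 y2 p_prime p_ge3); lia).
    assert (y1 = y2) by lia. subst x2 y2.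
    destruct w1, w2; unfold parabola_point in *; simpl in *. repeat f_equal; lia.
Qed.

End ParabolaBoxTriples.

Open Scope R_scope.

(** * Partial sums *)

Fixpoint partial_sum (g : nat -> R) (B : nat) : R :=
  match B with O => 0 | S B' => partial_sum g B' + g B end.

Lemma partial_sum_le g1 g2 B :
  (forall b, (1 <= b <= B)%nat -> g1 b <= g2 b) -> partial_sum g1 B <= partial_sum g2 B.
Proof.
  induction B as [|B IH]; intros H; simpl; [lra|].
  apply Rplus_le_compat; [apply IH; intros; apply H|apply H]; lia.
Qed.

Lemma partial_sum_const K B : partial_sum (fun _ => K) B = INR B * K.
Proof. induction B as [|B IH]; simpl partial_sum; [simpl; ring|rewrite IH, S_INR; ring]. Qed.

Lemma partial_sum_nonneg g B :
  (forall b, (1 <= b <= B)%nat -> 0 <= g b) -> 0 <= partial_sum g B.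
Proof.
  intros H. rewrite <- (Rmult_0_r (INR B)), <- partial_sum_const. now apply partial_sum_le.
Qed.

Lemma partial_sum_lin (g1 g2 g3 : nat -> R) K1 K2 K3 B :
  partial_sum (fun b => K1 * g1 b + K2 * g2 b + K3 * g3 b) B =
  K1 * partial_sum g1 B + K2 * partial_sum g2 B + K3 * partial_sum g3 B.
Proof. induction B as [|B IH]; simpl; [ring|rewrite IH; ring]. Qed.

Lemma partial_sum_inv_sq_le B : partial_sum (fun b => / (INR b * INR b)) B <= 2.
Proof.
  enough (partial_sum (fun b => / (INR b * INR b)) B <= 2 - 2 / (INR B + 1)).
  { assert (0 < 2 / (INR B + 1)) by (pose proof (pos_INR B); apply Rdiv_lt_0_compat; lra).
    lra. }
  induction B as [|B IH]; cbn [partial_sum].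
  { simpl. rewrite Rplus_0_l, Rdiv_1_r. lra. }
  rewrite S_INR. pose proof (pos_INR B).
  enough (/ ((INR B + 1) * (INR B + 1)) <= 2 / (INR B + 1) - 2 / (INR B + 1 + 1)) by lra.
  replace (2 / (INR B + 1) - 2 / (INR B + 1 + 1))
    with (/ ((INR B + 1) * ((INR B + 1 + 1) / 2))) by (field; lra).
  apply Rinv_le_contravar; nra.
Qed.

Lemma ln_le_compat x y : 0 < x -> x <= y -> ln x <= ln y.
Proof.
  intros Hx [Hxy|<-]; [left; now apply ln_increasing|right; reflexivity].
Qed.

Lemma inv_le_ln_diff x : 0 < x -> / (x + 1) <= ln (x + 1) - ln x.
Proof.
  intros Hx.
  assert (Hexp := exp_ineq1_le (- / (x + 1))).
  replace (1 + - / (x + 1)) with (x / (x + 1)) in Hexp by (field; lra).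
  assert (Hq : 0 < x / (x + 1)) by (apply Rdiv_lt_0_compat; lra).
  apply ln_le_compat in Hexp; [|exact Hq]. rewrite ln_exp in Hexp.
  unfold Rdiv in Hexp. rewrite ln_mult, ln_Rinv in Hexp; try lra.
  apply Rinv_0_lt_compat; lra.
Qed.

Lemma partial_sum_harmonic_le B : (1 <= B)%nat -> partial_sum (fun b => / INR b) B <= 1 + ln (INR B).
Proof.
  induction B as [|[|B] IH]; intros HB; [lia|simpl; rewrite ln_1; lra|].
  change (partial_sum (fun b => / INR b) (S (S B)))
    with (partial_sum (fun b => / INR b) (S B) + / INR (S (S B))).
  rewrite (S_INR (S B)).
  assert (0 < INR (S B)) by (apply lt_0_INR; lia).
  pose proof (inv_le_ln_diff (INR (S B)) H). specialize (IH ltac:(lia)). lra.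
Qed.

Lemma ln_2_lt_1 : ln 2 < 1.
Proof.
  rewrite <- (ln_exp 1). apply ln_increasing; [lra|].
  pose proof (exp_ineq1 1); lra.
Qed.

Lemma partial_sum_harmonic_le_log2 B m :
  INR B <= 2 ^ m -> partial_sum (fun b => / INR b) B <= 1 + INR m.
Proof.
  intros HB. destruct B as [|B]; [simpl; pose proof (pos_INR m); lra|].
  assert (H1 : 1 <= INR (S B)) by (apply (le_INR 1); lia).
  assert (Hln : ln (INR (S B)) <= INR m * ln 2).
  { rewrite <- ln_pow by lra. apply ln_le_compat; lra. }
  assert (0 < ln 2) by (rewrite <- ln_1; apply ln_increasing; lra).
  pose proof (partial_sum_harmonic_le (S B) ltac:(lia)). pose proof (pos_INR m).
  pose proof ln_2_lt_1. nra.
Qed.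

(** * Counting the codes *)

Lemma Rdiv_le_0_compat a b : 0 <= a -> 0 < b -> 0 <= a / b.
Proof. intros. apply Rmult_le_pos; [assumption|left; now apply Rinv_0_lt_compat]. Qed.

Lemma length_flat_map_seq_le {V : Type} (f : nat -> list V) (g : nat -> R) (B : nat) :
  (forall b, (1 <= b <= B)%nat -> INR (length (f b)) <= g b) ->
  INR (length (flat_map f (seq 1 B))) <= partial_sum g B.
Proof.
  induction B as [|B IH]; intros H; [simpl; lra|].
  rewrite seq_S, flat_map_app, length_app, plus_INR. cbn [partial_sum flat_map].
  rewrite app_nil_r. replace (1 + B)%nat with (S B) by lia.
  apply Rplus_le_compat; [apply IH; intros|apply H]; try apply H; lia.
Qed.

Lemma length_flat_map_le {A V : Type} (f : A -> list V) (l : list A) (M : R) :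
  (forall a, In a l -> INR (length (f a)) <= M) ->
  INR (length (flat_map f l)) <= INR (length l) * M.
Proof.
  induction l as [|a l IH]; intros H; [simpl; lra|].
  cbn [flat_map length]. rewrite length_app, plus_INR, S_INR.
  pose proof (H a (or_introl eq_refl)).
  assert (INR (length (flat_map f l)) <= INR (length l) * M) by (apply IH; intros; apply H; now right).
  lra.
Qed.

Lemma IZR_div_le x d : (0 < d)%Z -> IZR (x / d) <= IZR x / IZR d.
Proof.
  intros Hd. pose proof (Z.mul_div_le x d Hd) as H.
  apply IZR_le in H. rewrite mult_IZR in H.
  assert (0 < IZR d) by now apply IZR_lt.
  apply Rmult_le_reg_l with (IZR d); auto. field_simplify; lra.
Qed.

Lemma IZR_cdiv_ge x d : (0 < d)%Z -> IZR x / IZR d <= IZR (cdiv x d).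
Proof.
  intros Hd. pose proof (Z.mul_succ_div_gt (x + d - 1) d Hd) as Hsucc.
  assert (H : (x <= d * cdiv x d)%Z) by (unfold cdiv; lia).
  apply IZR_le in H. rewrite mult_IZR in H.
  assert (0 < IZR d) by now apply IZR_lt.
  apply Rmult_le_reg_l with (IZR d); auto. field_simplify; lra.
Qed.

Lemma length_Zrange_le lo hi y :
  IZR hi - IZR lo + 1 <= y -> 0 <= y -> INR (length (Zrange lo hi)) <= y.
Proof.
  intros Hy Hy0. rewrite length_Zrange. destruct (Z.le_gt_cases 0 (hi - lo + 1)).
  - rewrite INR_IZR_INZ, Z2Nat.id, plus_IZR, minus_IZR; auto.
  - replace (Z.to_nat (hi - lo + 1)) with 0%nat by lia. simpl. exact Hy0.
Qed.

Lemma length_codes_with_slope_le P L1 U1 b a : (0 <= P)%Z -> (L1 <= U1)%Z -> (0 < a)%Z ->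
  INR (length (codes_with_slope P L1 U1 b a)) <=
  IZR P / IZR a * ((IZR U1 - IZR L1) / IZR a + 1).
Proof.
  intros HP HL Ha. pose proof (IZR_le _ _ HP). pose proof (IZR_le _ _ HL).
  assert (Har : 0 < IZR a) by now apply IZR_lt.
  unfold codes_with_slope. rewrite length_map, length_prod, mult_INR.
  apply Rmult_le_compat; try apply pos_INR.
  - apply length_Zrange_le; [|apply Rdiv_le_0_compat; lra].
    pose proof (IZR_div_le (P - 1) a Ha). rewrite minus_IZR in *.
    enough ((IZR P - 1) / IZR a <= IZR P / IZR a) by lra.
    apply Rmult_le_compat_r; [left; apply Rinv_0_lt_compat|]; lra.
  - assert (0 <= (IZR U1 - IZR L1) / IZR a) by (apply Rdiv_le_0_compat; lra).
    apply length_Zrange_le; [|lra].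
    pose proof (IZR_div_le U1 a Ha). pose proof (IZR_cdiv_ge L1 a Ha).
    replace ((IZR U1 - IZR L1) / IZR a) with (IZR U1 / IZR a - IZR L1 / IZR a) by (field; lra).
    lra.
Qed.

Definition codes_with_b_bound (p l1 u1 l2 u2 x : R) : R :=
  (x * (u1 / l2 - l1 / u2) + 1) * (p / (x * (l1 / u2)) * ((u1 - l1) / (x * (l1 / u2)) + 1)).

(* Every slope [a] in the range satisfies [a >= b l1/u2], which bounds [codes_with_slope] uniformly. *)
Lemma length_codes_with_b_le P L1 U1 L2 U2 b :
  (0 <= P)%Z -> (0 < L1 <= U1)%Z -> (0 < L2 <= U2)%Z -> (0 < b)%Z ->
  INR (length (codes_with_b P L1 U1 L2 U2 b)) <=
  codes_with_b_bound (IZR P) (IZR L1) (IZR U1) (IZR L2) (IZR U2) (IZR b).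
Proof.
  intros HP HL1 HL2 Hb. unfold codes_with_b, codes_with_b_bound.
  pose proof (IZR_le _ _ HP).
  assert (0 < IZR L1) by (apply IZR_lt; lia). assert (IZR L1 <= IZR U1) by (apply IZR_le; lia).
  assert (0 < IZR L2) by (apply IZR_lt; lia). assert (IZR L2 <= IZR U2) by (apply IZR_le; lia).
  assert (1 <= IZR b) by (apply IZR_le; lia).
  set (ga := IZR U1 / IZR L2 - IZR L1 / IZR U2). set (al := IZR L1 / IZR U2).
  assert (Hal : 0 < IZR b * al) by (apply Rmult_lt_0_compat; [lra|apply Rdiv_lt_0_compat; lra]).
  assert (Hga : 0 <= IZR b * ga).
  { apply Rmult_le_pos; [lra|]. unfold ga, al. enough (IZR L1 / IZR U2 <= IZR U1 / IZR L2) by lra.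
    apply Rmult_le_reg_r with (IZR L2 * IZR U2); [nra|].
    replace (IZR L1 / IZR U2 * (IZR L2 * IZR U2)) with (IZR L1 * IZR L2) by (field; lra).
    replace (IZR U1 / IZR L2 * (IZR L2 * IZR U2)) with (IZR U1 * IZR U2) by (field; lra). nra. }
  assert (0 <= (IZR U1 - IZR L1) / (IZR b * al)) by (apply Rdiv_le_0_compat; lra).
  pose proof (IZR_cdiv_ge (b * L1) U2 ltac:(lia)) as Hceil. rewrite mult_IZR in Hceil.
  eapply Rle_trans; [apply length_flat_map_le|apply Rmult_le_compat_r].
  - intros a Ha. apply In_Zrange in Ha.
    assert (Ha1 : IZR b * al <= IZR a).
    { assert (IZR (cdiv (b * L1) U2) <= IZR a) by (apply IZR_le; lia).
      unfold al. replace (IZR b * (IZR L1 / IZR U2)) with (IZR b * IZR L1 / IZR U2) by (field; lra).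
      lra. }
    assert (Ha0 : (0 < a)%Z) by (apply lt_IZR; lra).
    eapply Rle_trans; [apply length_codes_with_slope_le; lia|].
    assert (0 <= (IZR U1 - IZR L1) / IZR a) by (apply Rdiv_le_0_compat; lra).
    apply Rmult_le_compat; [apply Rdiv_le_0_compat; lra|lra| |].
    + apply Rmult_le_compat_l; [lra|apply Rinv_le_contravar; lra].
    + apply Rplus_le_compat_r, Rmult_le_compat_l; [lra|apply Rinv_le_contravar; lra].
  - apply Rmult_le_pos; [apply Rdiv_le_0_compat|]; lra.
  - apply length_Zrange_le; [|lra].
    pose proof (IZR_div_le (b * U1) L2 ltac:(lia)). rewrite mult_IZR in *. unfold ga, al.
    replace (IZR b * (IZR U1 / IZR L2 - IZR L1 / IZR U2))
      with (IZR b * IZR U1 / IZR L2 - IZR b * IZR L1 / IZR U2) by (field; lra).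
    lra.
Qed.

Definition code_count_bound (p l1 u1 l2 u2 : R) (B : nat) : R :=
  let al := l1 / u2 in let ga := u1 / l2 - l1 / u2 in let De := u1 - l1 in
  (p * ga * De / (al * al) + p / al) * partial_sum (fun b => / INR b) B
  + (p * ga / al) * INR B
  + (p * De / (al * al)) * partial_sum (fun b => / (INR b * INR b)) B.

Lemma partial_sum_codes_with_b_bound p l1 u1 l2 u2 B : 0 < l1 -> 0 < l2 -> 0 < u2 ->
  partial_sum (fun b => codes_with_b_bound p l1 u1 l2 u2 (INR b)) B = code_count_bound p l1 u1 l2 u2 B.
Proof.
  intros Hl1 Hl2 Hu2. unfold code_count_bound, codes_with_b_bound; cbv zeta.
  rewrite <- (Rmult_1_r (INR B)), <- partial_sum_const, <- partial_sum_lin.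
  induction B as [|B IH]; cbn [partial_sum]; [reflexivity|].
  rewrite IH. f_equal. pose proof (pos_INR B). rewrite S_INR. field. repeat split; lra.
Qed.

Lemma length_code_range_le (P L1 U1 L2 U2 : Z) :
  (0 <= P)%Z -> (0 < L1 <= U1)%Z -> (0 < L2 <= U2)%Z ->
  INR (length (code_range P L1 U1 L2 U2)) <=
  code_count_bound (IZR P) (IZR L1) (IZR U1) (IZR L2) (IZR U2) (Z.to_nat ((P - 1) * U2 / L1)).
Proof.
  intros HP HL1 HL2.
  rewrite <- partial_sum_codes_with_b_bound by (apply IZR_lt; lia).
  apply length_flat_map_seq_le. intros b Hb.
  rewrite (INR_IZR_INZ b). apply length_codes_with_b_le; lia.
Qed.

Lemma div_le_of_le_mul k a d : 0 < d -> a <= k * d -> a / d <= k.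
Proof.
  intros Hd H. apply Rmult_le_reg_r with d; auto.
  unfold Rdiv. rewrite Rmult_assoc, Rinv_l; lra.
Qed.

Lemma Rmult4_le_compat a b c d a' b' c' d' :
  0 <= a <= a' -> 0 <= b <= b' -> 0 <= c <= c' -> 0 <= d <= d' ->
  a * b * c * d <= a' * b' * c' * d'.
Proof.
  intros. assert (0 <= a * b) by nra. assert (a * b <= a' * b') by (apply Rmult_le_compat; lra).
  assert (0 <= a * b * c) by nra. assert (a * b * c <= a' * b' * c') by (apply Rmult_le_compat; lra).
  apply Rmult_le_compat; lra.
Qed.

Section CodeCountEstimate.

(* [sm], [sn], [X] and [r] play the roles of [s_m], [s_n], [2^n] and [n^eps]. *)
Variables p sm sn X n r c l1 u1 l2 u2 : R.
Variable B : nat.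
Hypothesis p_pos : 0 < p.
Hypothesis p_le : p <= sm.
Hypothesis sm_le : sm <= 2/3 * sn.
Hypothesis sn_eq : sn * (c * n * r) = X.
Hypothesis width_nonneg : 0 <= u1 - l1.
Hypothesis widths_eq : u1 - l1 = u2 - l2.
Hypothesis width_le : u1 - l1 <= 5/3 * sn.
Hypothesis l1_ge : 49/100 * X <= l1.
Hypothesis l2_ge : 2/5 * X <= l2 * r.
Hypothesis u2_le : u2 * r <= 101/100 * X.
Hypothesis X_pos : 0 < X.
Hypothesis r_ge : 42 <= r.
Hypothesis r_ge_c : 29 * c <= r.
Hypothesis c_ge : 12 <= c.
Hypothesis n_ge : 10 <= n.
Hypothesis X_ge : 5 * c * c * n * n * r <= X.
Hypothesis B_le : INR B <= p * u2 / l1.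
Let H := partial_sum (fun b => / INR b) B.
Hypothesis harmonic_le : H <= n.

Let De := u1 - l1.
Let H2 := partial_sum (fun b => / (INR b * INR b)) B.
Let Q := p * sn / (c * r).

Lemma sn_pos : 0 < sn.
Proof. rewrite <- sn_eq in X_pos. nra. Qed.

Lemma l2_pos : 0 < l2.
Proof. nra. Qed.

Lemma u2_pos : 0 < u2.
Proof. pose proof l2_pos. unfold De in *. lra. Qed.

Lemma u2_l1_ratio : (u2 + l1) / l1 <= 21/20.
Proof. apply div_le_of_le_mul; [lra|]. assert (u2 * 42 <= u2 * r) by (pose proof u2_pos; nra). lra. Qed.

Lemma u2_l2_ratio : u2 / l2 <= 21/20.
Proof.
  pose proof l2_pos. pose proof sn_pos. apply div_le_of_le_mul; [lra|].
  assert (HDe : De * (c * n * r) <= 5/3 * X).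
  { rewrite <- sn_eq. replace (5/3 * (sn * (c * n * r))) with ((5/3 * sn) * (c * n * r)) by ring.
    apply Rmult_le_compat_r; [|unfold De; lra]. repeat apply Rmult_le_pos; lra. }
  assert (De * r * 120 <= De * (c * n * r)).
  { replace (De * (c * n * r)) with (De * r * (c * n)) by ring.
    apply Rmult_le_compat_l; [apply Rmult_le_pos; unfold De; lra|nra]. }
  assert (De <= 1/20 * l2) by (apply Rmult_le_reg_r with r; lra).
  unfold De in *. lra.
Qed.

Lemma u2_l1_le : u2 / l1 <= 207/100 / r.
Proof.
  apply div_le_of_le_mul; [lra|]. unfold Rdiv.
  assert (Hr : 0 < / r) by (apply Rinv_0_lt_compat; lra).
  assert (u2 <= 101/100 * X * / r).
  { apply Rmult_le_reg_r with r; [lra|]. rewrite Rmult_assoc, Rinv_l; lra. }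
  nra.
Qed.

Lemma H_nonneg : 0 <= H.
Proof. apply partial_sum_nonneg. intros b Hb. left. apply Rinv_0_lt_compat, lt_0_INR. lia. Qed.

Lemma Q_eq : Q = p * sn * (sn * n / X).
Proof. unfold Q. rewrite <- sn_eq. field. repeat split; nra. Qed.

Lemma main_term_le : (p * (u1 / l2 - l1 / u2) * De / (l1 / u2 * (l1 / u2))) * H <= 25/4 * Q.
Proof.
  pose proof l2_pos. pose proof u2_pos. pose proof sn_pos.
  replace ((p * (u1 / l2 - l1 / u2) * De / (l1 / u2 * (l1 / u2))) * H)
    with (p * (De * De) * ((u2 + l1) / l1) * (u2 / l2) * (H / l1))
    by (unfold De; replace u1 with (l1 + u2 - l2) by lra; field; repeat split; lra).
  assert (HH : H / l1 <= n / (49/100 * X)).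
  { apply div_le_of_le_mul; [lra|]. unfold Rdiv. rewrite Rmult_assoc.
    enough (1 <= / (49/100 * X) * l1) by (pose proof H_nonneg; nra).
    rewrite <- (Rinv_l (49/100 * X)) by lra.
    apply Rmult_le_compat_l; [left; apply Rinv_0_lt_compat|]; lra. }
  eapply Rle_trans.
  { apply (Rmult4_le_compat _ _ _ _ (p * (25/9 * sn * sn)) (21/20) (21/20) (n / (49/100 * X))).
    - split; [apply Rmult_le_pos; [lra|unfold De; nra]|apply Rmult_le_compat_l; [lra|unfold De; nra]].
    - split; [apply Rdiv_le_0_compat; lra|apply u2_l1_ratio].
    - split; [apply Rdiv_le_0_compat; lra|apply u2_l2_ratio].
    - split; [apply Rdiv_le_0_compat; [apply H_nonneg|lra]|exact HH]. }
  rewrite Q_eq. right. field. lra.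
Qed.

Lemma harmonic_term_le : p / (l1 / u2) * H <= 1/2 * Q.
Proof.
  pose proof u2_pos. pose proof sn_pos. pose proof H_nonneg.
  replace (p / (l1 / u2) * H) with (p * (u2 / l1) * H) by (field; lra).
  assert (p * (u2 / l1) * H <= p * (207/100 / r) * n).
  { apply Rmult_le_compat; try lra; [|apply Rmult_le_compat_l; [lra|apply u2_l1_le]].
    apply Rmult_le_pos; [lra|apply Rdiv_le_0_compat; lra]. }
  assert (207/100 / r * n <= 1/2 * (sn / (c * r))).
  { replace (207/100 / r * n) with ((207/100 * (c * c * n * n * r)) * / (c * c * n * r * r))
      by (field; lra).
    replace (1/2 * (sn / (c * r))) with ((1/2 * X) * / (c * c * n * r * r))
      by (rewrite <- sn_eq; field; lra).
    apply Rmult_le_compat_r; [left; apply Rinv_0_lt_compat; repeat apply Rmult_lt_0_compat; lra|].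
    assert (0 <= c * c * n * n * r) by (repeat apply Rmult_le_pos; lra). lra. }
  unfold Q. replace (1/2 * (p * sn / (c * r))) with (p * (1/2 * (sn / (c * r)))) by (field; lra).
  replace (p * (207/100 / r) * n) with (p * (207/100 / r * n)) in * by ring.
  assert (p * (207/100 / r * n) <= p * (1/2 * (sn / (c * r)))) by (apply Rmult_le_compat_l; lra).
  lra.
Qed.

Lemma linear_term_le : p * (u1 / l2 - l1 / u2) / (l1 / u2) * INR B <= 1/4 * Q.
Proof.
  pose proof l2_pos. pose proof u2_pos. pose proof sn_pos. pose proof (pos_INR B).
  replace (p * (u1 / l2 - l1 / u2) / (l1 / u2) * INR B)
    with (p * De * ((u2 + l1) / l1) * (INR B / l2))
    by (unfold De; replace u1 with (l1 + u2 - l2) by lra; field; repeat split; lra).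
  assert (HB : INR B / l2 <= p * (21/20) / (49/100 * X)).
  { assert (INR B / l2 <= p / l1 * (u2 / l2)).
    { replace (p / l1 * (u2 / l2)) with (p * u2 / l1 * / l2) by (field; lra).
      apply Rmult_le_compat_r; [left; apply Rinv_0_lt_compat|]; lra. }
    assert (p / l1 <= p / (49/100 * X)).
    { apply Rmult_le_compat_l; [lra|apply Rinv_le_contravar; lra]. }
    assert (p / l1 * (u2 / l2) <= p / (49/100 * X) * (21/20)).
    { apply Rmult_le_compat; try lra; try apply Rdiv_le_0_compat; try lra. apply u2_l2_ratio. }
    replace (p * (21/20) / (49/100 * X)) with (p / (49/100 * X) * (21/20)) by (field; lra). lra. }
  assert (p * (21/20) / (49/100 * X) <= 2/3 * sn * (21/20) / (49/100 * X)).
  { apply Rmult_le_compat_r; [left; apply Rinv_0_lt_compat|]; lra. }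
  eapply Rle_trans.
  { apply (Rmult4_le_compat p De _ _ p (5/3 * sn) (21/20) (2/3 * sn * (21/20) / (49/100 * X))).
    - lra.
    - unfold De; lra.
    - split; [apply Rdiv_le_0_compat; lra|apply u2_l1_ratio].
    - split; [apply Rdiv_le_0_compat; lra|lra]. }
  rewrite Q_eq.
  replace (p * (5/3 * sn) * (21/20) * (2/3 * sn * (21/20) / (49/100 * X)))
    with (p * sn * (sn / X) * (5/2)) by (field; lra).
  replace (1/4 * (p * sn * (sn * n / X))) with (p * sn * (sn / X) * (1/4 * n)) by (field; lra).
  apply Rmult_le_compat_l; [apply Rmult_le_pos; [nra|apply Rdiv_le_0_compat; lra]|lra].
Qed.

Lemma inverse_square_term_le : p * De / (l1 / u2 * (l1 / u2)) * H2 <= 1/2 * Q.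
Proof.
  pose proof u2_pos. pose proof sn_pos.
  replace (p * De / (l1 / u2 * (l1 / u2)) * H2) with (p * De * (u2 / l1) * (u2 / l1) * H2)
    by (field; lra).
  eapply Rle_trans.
  { apply (Rmult4_le_compat (p * De) _ _ _ (p * (5/3 * sn)) (207/100 / r) (207/100 / r) 2).
    - split; [apply Rmult_le_pos; unfold De; lra|apply Rmult_le_compat_l; unfold De; lra].
    - split; [apply Rdiv_le_0_compat; lra|apply u2_l1_le].
    - split; [apply Rdiv_le_0_compat; lra|apply u2_l1_le].
    - split; [|apply partial_sum_inv_sq_le].
      apply partial_sum_nonneg. intros b Hb. left. apply Rinv_0_lt_compat.
      assert (0 < INR b) by (apply lt_0_INR; lia). nra. }
  unfold Q.
  replace (p * (5/3 * sn) * (207/100 / r) * (207/100 / r) * 2)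
    with (p * sn * ((5/3 * 2 * (207/100) * (207/100) * c) * / (c * r * r))) by (field; lra).
  replace (1/2 * (p * sn / (c * r))) with (p * sn * ((1/2 * r) * / (c * r * r))) by (field; lra).
  apply Rmult_le_compat_l; [nra|].
  apply Rmult_le_compat_r; [left; apply Rinv_0_lt_compat; repeat apply Rmult_lt_0_compat|]; lra.
Qed.

Lemma code_count_bound_le : code_count_bound p l1 u1 l2 u2 B <= 8 * sm * sn / (c * r).
Proof.
  pose proof main_term_le. pose proof harmonic_term_le.
  pose proof linear_term_le. pose proof inverse_square_term_le.
  pose proof sn_pos.
  assert (15/2 * Q <= 8 * sm * sn / (c * r)).
  { unfold Q. replace (8 * sm * sn / (c * r)) with (8 * sm * (sn / (c * r))) by (field; lra).
    replace (15/2 * (p * sn / (c * r))) with (15/2 * p * (sn / (c * r))) by (field; lra).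
    apply Rmult_le_compat_r; [apply Rdiv_le_0_compat; nra|lra]. }
  unfold code_count_bound. cbv zeta. rewrite Rmult_plus_distr_r. unfold De, H, H2 in *. lra.
Qed.

End CodeCountEstimate.

(** * The scales [s_n] and [Y_n] *)

Lemma Rpower_between x e : 1 <= x -> 0 <= e <= 1 -> 1 <= Rpower x e <= x.
Proof.
  intros Hx He. split.
  - rewrite <- (Rpower_O x) by lra. apply Rle_Rpower; lra.
  - rewrite <- (Rpower_1 x) at 2 by lra. apply Rle_Rpower; lra.
Qed.

Lemma growth_chain (f : nat -> R) (q : R) (k0 : nat) :
  1 <= q -> (forall k, (k0 <= k)%nat -> 0 < f k) ->
  (forall k, (k0 <= k)%nat -> q * f k <= f (S k)) ->
  forall m n, (k0 <= m)%nat -> (m < n)%nat -> q * f m <= f n.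
Proof.
  intros Hq Hpos Hstep m n Hm Hmn. induction Hmn as [|n Hmn IH].
  - now apply Hstep.
  - pose proof (Hstep n ltac:(lia)). pose proof (Hpos n ltac:(lia)). nra.
Qed.

Lemma IZR_of_nat_le_INR (k n : nat) : (k <= n)%nat -> IZR (Z.of_nat k) <= INR n.
Proof. intros H. rewrite <- INR_IZR_INZ. now apply le_INR. Qed.

Lemma pow4_le_pow2 n : (16 <= n)%nat -> INR n ^ 4 <= 2 ^ n.
Proof.
  induction 1 as [|n Hn IH]; [simpl; lra|].
  rewrite S_INR. change (2 ^ S n) with (2 * 2 ^ n).
  pose proof (IZR_of_nat_le_INR 16 n Hn) as H16; simpl in H16.
  assert ((INR n + 1) ^ 4 <= (17/16 * INR n) ^ 4) by (apply pow_incr; lra).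
  rewrite Rpow_mult_distr in H.
  assert (0 <= INR n ^ 4) by (apply pow_le; lra).
  assert ((17/16) ^ 4 <= 2) by (simpl; lra).
  nra.
Qed.

Lemma Int_part_between x : IZR (Int_part x) <= x < IZR (Int_part x) + 1.
Proof. destruct (base_Int_part x). lra. Qed.

Lemma IZR_pow2 k : IZR (2 ^ Z.of_nat k) = 2 ^ k.
Proof. now rewrite pow_IZR. Qed.

Lemma INR_Z_to_nat_le z y : IZR z <= y -> 0 <= y -> INR (Z.to_nat z) <= y.
Proof.
  intros H1 H2. destruct (Z.le_gt_cases 0 z).
  - rewrite INR_IZR_INZ, Z2Nat.id; auto.
  - replace (Z.to_nat z) with 0%nat by lia. exact H2.
Qed.

Section Scales.

Variables eps c : R.
Hypothesis eps_range : 0 < eps < 1.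
Hypothesis c_ge : 12 <= c.

(* [s_ eps c k] and [Y_ eps k] are the integer parts of [s_real k] and [Y_real k]. *)
Definition rho (k : nat) : R := Rpower (INR k) eps.
Definition s_real (k : nat) : R := 2 ^ k / (c * Rpower (INR k) (1 + eps)).
Definition Y_real (k : nat) : R := 2 ^ k / Rpower (INR k) eps.

Lemma rho_between k : (1 <= k)%nat -> 1 <= rho k <= INR k.
Proof. intros Hk. apply Rpower_between; [apply (le_INR 1); exact Hk|lra]. Qed.

Lemma Y_real_eq k : Y_real k * rho k = 2 ^ k.
Proof. unfold Y_real, rho. field. apply Rgt_not_eq, exp_pos. Qed.

Lemma s_real_eq k : (1 <= k)%nat -> s_real k * (c * INR k * rho k) = 2 ^ k.
Proof.
  intros Hk. pose proof (rho_between k Hk).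
  unfold s_real, rho in *. rewrite Rpower_plus, Rpower_1 by lra. field. lra.
Qed.

Lemma rho_succ_le k : (1 <= k)%nat -> rho (S k) <= rho k * (INR (S k) / INR k).
Proof.
  intros Hk. unfold rho.
  assert (H1 : 1 <= INR k) by (apply (le_INR 1); auto).
  assert (Hq : 0 < INR (S k) / INR k) by (rewrite S_INR; apply Rdiv_lt_0_compat; lra).
  replace (INR (S k)) with (INR k * (INR (S k) / INR k)) at 1 by (field; lra).
  rewrite <- Rpower_mult_distr by lra.
  apply Rmult_le_compat_l; [left; apply exp_pos|].
  apply Rpower_between; [|lra].
  rewrite S_INR. apply (Rmult_le_reg_r (INR k)); [lra|]. field_simplify; lra.
Qed.

Lemma Y_real_pos k : 0 < Y_real k.
Proof. apply Rdiv_lt_0_compat; [apply pow_lt; lra|apply exp_pos]. Qed.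

Lemma s_real_pos k : 0 < s_real k.
Proof.
  apply Rdiv_lt_0_compat; [apply pow_lt; lra|].
  apply Rmult_lt_0_compat; [lra|apply exp_pos].
Qed.

Lemma Y_real_step k : (9 <= k)%nat -> 9/5 * Y_real k <= Y_real (S k).
Proof.
  intros Hk. pose proof (IZR_of_nat_le_INR 9 k Hk) as H9. simpl in H9.
  pose proof (rho_succ_le k ltac:(lia)) as Hs. pose proof (rho_between k ltac:(lia)).
  pose proof (rho_between (S k) ltac:(lia)).
  unfold Y_real. fold (rho k) (rho (S k)). rewrite S_INR in Hs. simpl pow.
  assert (H2 : 0 < 2 ^ k) by (apply pow_lt; lra).
  apply (Rmult_le_reg_r (rho k * rho (S k))); [nra|].
  replace (9/5 * (2 ^ k / rho k) * (rho k * rho (S k))) with (9/5 * 2 ^ k * rho (S k)) by (field; lra).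
  replace (2 * 2 ^ k / rho (S k) * (rho k * rho (S k))) with (2 * 2 ^ k * rho k) by (field; lra).
  enough (9 * rho (S k) <= 10 * rho k) by nra.
  apply (Rmult_le_reg_r (INR k)); [lra|].
  apply (Rmult_le_compat_l 9) in Hs; [|lra].
  replace (9 * (rho k * ((INR k + 1) / INR k))) with (9 * rho k * (INR k + 1) / INR k) in Hs by (field; lra).
  apply (Rmult_le_compat_r (INR k)) in Hs; [|lra].
  replace (9 * rho k * (INR k + 1) / INR k * INR k) with (9 * rho k * (INR k + 1)) in Hs by (field; lra).
  nra.
Qed.

Lemma s_real_Y_real k : (1 <= k)%nat -> s_real k = Y_real k / (c * INR k).
Proof.
  intros Hk. pose proof (rho_between k Hk).
  unfold s_real, Y_real. rewrite Rpower_plus, Rpower_1 by lra. fold (rho k). field. lra.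
Qed.

Lemma s_real_step k : (9 <= k)%nat -> 3/2 * s_real k <= s_real (S k).
Proof.
  intros Hk. pose proof (IZR_of_nat_le_INR 9 k Hk) as H9. simpl in H9.
  rewrite !s_real_Y_real by lia. rewrite S_INR.
  pose proof (Y_real_step k Hk). pose proof (Y_real_pos k).
  apply (Rmult_le_reg_r (c * INR k * (INR k + 1))); [nra|].
  replace (3/2 * (Y_real k / (c * INR k)) * (c * INR k * (INR k + 1)))
    with (3/2 * Y_real k * (INR k + 1)) by (field; lra).
  replace (Y_real (S k) / (c * (INR k + 1)) * (c * INR k * (INR k + 1)))
    with (Y_real (S k) * INR k) by (field; lra).
  nra.
Qed.

Lemma Y_real_growth m n : (9 <= m)%nat -> (m < n)%nat -> 9/5 * Y_real m <= Y_real n.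
Proof.
  apply growth_chain; [lra|intros; apply Y_real_pos|exact Y_real_step].
Qed.

Lemma s_real_growth m n : (9 <= m)%nat -> (m < n)%nat -> 3/2 * s_real m <= s_real n.
Proof.
  apply growth_chain; [lra|intros; apply s_real_pos|exact s_real_step].
Qed.

Definition large (k : nat) : Prop :=
  (16 <= k)%nat /\ 5 * c * c <= INR k /\ 42 <= rho k /\ 29 * c <= rho k.

Lemma eventually_large : exists N, forall k, (N <= k)%nat -> large k.
Proof.
  set (K := 42 + 29 * c). set (M := Rpower K (/ eps)).
  assert (HM : 0 < M) by apply exp_pos.
  destruct (INR_archimed 1 (M + 5 * c * c + 16) ltac:(lra)) as [N HN].
  exists N. intros k Hk. apply le_INR in Hk.
  assert (0 <= 5 * c * c) by nra.
  split; [|split; [lra|]].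
  - apply INR_lt. rewrite (INR_IZR_INZ 15). simpl. lra.
  - enough (K <= rho k) by (unfold K in *; lra).
    replace K with (Rpower M eps).
    + apply Rle_Rpower_l; lra.
    + unfold M. rewrite Rpower_mult. replace (/ eps * eps) with 1 by (field; lra).
      apply Rpower_1. unfold K; lra.
Qed.

Lemma s_real_ge_5 k : large k -> 5 <= s_real k.
Proof.
  intros (Hk & Hk5 & _). pose proof (IZR_of_nat_le_INR 16 k Hk) as H16. simpl in H16.
  pose proof (pow4_le_pow2 k Hk). pose proof (rho_between k ltac:(lia)).
  pose proof (s_real_eq k ltac:(lia)). pose proof (s_real_pos k).
  set (x := INR k) in *.
  assert (Hx4 : x * x * (x * x) <= s_real k * c * (x * x)).
  { replace (x * x * (x * x)) with (x ^ 4) by ring.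
    apply Rle_trans with (2 ^ k); [assumption|]. rewrite <- H1.
    replace (s_real k * c * (x * x)) with (s_real k * (c * x * x)) by ring.
    apply Rmult_le_compat_l; [lra|]. apply Rmult_le_compat_l; nra. }
  assert (Hx2 : x * x <= s_real k * c) by (apply Rmult_le_reg_r with (x * x); nra).
  assert (5 * c <= x * x) by nra.
  apply Rmult_le_reg_r with c; lra.
Qed.

Lemma s_floor k : s_real k - 1 < IZR (s_ eps c k) <= s_real k.
Proof. pose proof (Int_part_between (s_real k)). unfold s_. fold (s_real k). lra. Qed.

Lemma Y_floor k : Y_real k - 1 < IZR (Y_ eps k) <= Y_real k.
Proof. pose proof (Int_part_between (Y_real k)). unfold Y_. fold (Y_real k). lra. Qed.

Lemma s_gt_3 k : large k -> (3 < s_ eps c k)%Z.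
Proof. intros Hk. pose proof (s_real_ge_5 k Hk). pose proof (s_floor k). apply lt_IZR. lra. Qed.

Section Offsets.

Variables m n : nat.
Variable P : Z.
Hypothesis m_large : large m.
Hypothesis n_large : large n.
Hypothesis m_lt_n : (m < n)%nat.
Hypothesis P_ge : (3 <= P)%Z.
Hypothesis P_lt : (P < s_ eps c m)%Z.

(* For [u] on the parabola in [Q_m] and [w] in [Q_n]:
   [L1 <= fst w - fst u <= U1] and [L2 <= snd w - snd u <= U2]. *)
Let L1 := (2 ^ Z.of_nat n - 2 ^ Z.of_nat m - (P - 1))%Z.
Let U1 := (2 ^ Z.of_nat n + s_ eps c n - 2 ^ Z.of_nat m)%Z.
Let L2 := (Y_ eps n - s_ eps c n - Y_ eps m)%Z.
Let U2 := (Y_ eps n - Y_ eps m + (P - 1))%Z.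

Lemma n_ge_16 : 16 <= INR n.
Proof. destruct n_large as [H _]. exact (IZR_of_nat_le_INR 16 n H). Qed.

Lemma pow2_n_ge : 5 * c * c * INR n * INR n * rho n <= 2 ^ n.
Proof.
  destruct n_large as (Hn & Hn5 & _). pose proof n_ge_16.
  pose proof (pow4_le_pow2 n Hn). pose proof (rho_between n ltac:(lia)).
  simpl in H0.
  replace (5 * c * c * INR n * INR n * rho n) with (5 * c * c * (INR n * INR n) * rho n) by ring.
  apply Rle_trans with (INR n * (INR n * INR n) * INR n); [|lra].
  apply Rmult_le_compat; nra.
Qed.

Lemma s_real_n_small : s_real n * rho n * 120 <= 2 ^ n.
Proof.
  pose proof n_ge_16. pose proof (s_real_pos n).
  pose proof (rho_between n ltac:(lia)). rewrite <- s_real_eq by (destruct n_large; lia).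
  assert (0 <= s_real n * rho n) by nra. assert (120 <= c * INR n) by nra. nra.
Qed.

Lemma s_real_m_le : s_real m <= 2/3 * s_real n.
Proof.
  destruct m_large. pose proof (s_real_growth m n ltac:(lia) m_lt_n). lra.
Qed.

Lemma pow2_m_le : 2 * 2 ^ m <= 2 ^ n.
Proof. change (2 * 2 ^ m) with (2 ^ S m). apply Rle_pow; [lra|exact m_lt_n]. Qed.

Lemma P_le_s_real_m : IZR P <= s_real m - 1.
Proof.
  pose proof (s_floor m). assert (IZR P <= IZR (s_ eps c m) - 1); [|lra].
  rewrite <- minus_IZR. apply IZR_le. lia.
Qed.

Lemma Y_m_le : IZR (Y_ eps m) <= 5/9 * Y_real n.
Proof.
  destruct m_large. pose proof (Y_real_growth m n ltac:(lia) m_lt_n).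
  pose proof (Y_floor m). lra.
Qed.

Ltac offsets_to_R :=
  unfold L1, U1, L2, U2; repeat first [rewrite plus_IZR | rewrite minus_IZR]; rewrite ?IZR_pow2.

Lemma l1_ge : 49/100 * 2 ^ n <= IZR L1.
Proof.
  offsets_to_R. pose proof pow2_m_le. pose proof P_le_s_real_m. pose proof s_real_m_le. pose proof s_real_n_small.
  destruct n_large as (_ & _ & Hr & _). pose proof (s_real_pos n).
  assert (s_real n * 42 * 120 <= 2 ^ n) by nra. lra.
Qed.

Lemma width_between : 0 <= IZR U1 - IZR L1 <= 5/3 * s_real n.
Proof.
  offsets_to_R. pose proof (s_floor n). pose proof P_le_s_real_m. pose proof s_real_m_le.
  pose proof (s_real_pos n). assert (3 <= IZR P) by (apply IZR_le; lia).
  assert (0 <= IZR (s_ eps c n)) by (apply IZR_le, Z.lt_pred_le, lt_IZR; simpl; lra).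
  lra.
Qed.

Lemma l2_ge : 2/5 * 2 ^ n <= IZR L2 * rho n.
Proof.
  offsets_to_R. pose proof (s_floor n). pose proof (Y_floor n). pose proof Y_m_le.
  pose proof s_real_n_small. pose proof pow2_n_ge. pose proof (Y_real_eq n).
  destruct n_large as (_ & Hn5 & Hr & _). pose proof n_ge_16.
  assert (720 * rho n <= 2 ^ n).
  { apply Rle_trans with (5 * c * c * INR n * INR n * rho n); [|assumption].
    apply Rmult_le_compat_r; [lra|].
    assert (144 <= c * c) by nra. assert (256 <= INR n * INR n) by nra.
    replace (5 * c * c * INR n * INR n) with (5 * (c * c) * (INR n * INR n)) by ring. nra. }
  assert (IZR (Y_ eps n) - IZR (s_ eps c n) - IZR (Y_ eps m) >= 4/9 * Y_real n - 1 - s_real n) by lra.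
  assert ((4/9 * Y_real n - 1 - s_real n) * rho n <= (IZR (Y_ eps n) - IZR (s_ eps c n) - IZR (Y_ eps m)) * rho n)
    by (apply Rmult_le_compat_r; lra).
  nra.
Qed.

Lemma u2_le : IZR U2 * rho n <= 101/100 * 2 ^ n.
Proof.
  offsets_to_R. pose proof (Y_floor n). pose proof (Y_floor m). pose proof (Y_real_pos m).
  pose proof P_le_s_real_m. pose proof s_real_m_le. pose proof s_real_n_small. pose proof (Y_real_eq n). pose proof (s_real_pos n).
  destruct n_large as (_ & _ & Hr & _).
  assert (0 <= IZR (Y_ eps m)) by (apply IZR_le, Z.lt_pred_le, lt_IZR; simpl; lra).
  assert (IZR (Y_ eps n) - IZR (Y_ eps m) + (IZR P - 1) <= Y_real n + s_real n) by lra.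
  assert ((IZR (Y_ eps n) - IZR (Y_ eps m) + (IZR P - 1)) * rho n <= (Y_real n + s_real n) * rho n)
    by (apply Rmult_le_compat_r; lra).
  nra.
Qed.

Lemma offsets_pos : (0 < L1)%Z /\ (0 < L2)%Z.
Proof.
  pose proof l1_ge. pose proof l2_ge. destruct n_large as (_ & _ & Hr & _).
  assert (0 < 2 ^ n) by (apply pow_lt; lra).
  split; apply lt_IZR; [lra|]. apply (Rmult_lt_reg_r (rho n)); lra.
Qed.

Lemma offsets_le : (L1 <= U1)%Z /\ (L2 <= U2)%Z.
Proof.
  destruct width_between as [H _]. rewrite <- minus_IZR in H. apply le_IZR in H.
  unfold L1, U1, L2, U2 in *. lia.
Qed.

Lemma u2_le_l1 : IZR U2 <= IZR L1.
Proof.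
  pose proof l1_ge. pose proof u2_le. destruct offsets_pos, offsets_le.
  destruct n_large as (_ & _ & Hr & _).
  assert (0 < IZR U2) by (apply IZR_lt; lia).
  assert (IZR U2 * 42 <= IZR U2 * rho n) by (apply Rmult_le_compat_l; lra). lra.
Qed.

Let B := Z.to_nat ((P - 1) * U2 / L1).

Lemma b_count_le : INR B <= IZR P * IZR U2 / IZR L1.
Proof.
  destruct offsets_pos as [HL1 HL2]. pose proof u2_le_l1. pose proof l2_ge. destruct offsets_le.
  assert (0 < IZR L1) by (apply IZR_lt; lia). assert (0 <= IZR U2) by (apply IZR_le; lia).
  assert (3 <= IZR P) by (apply IZR_le; lia).
  apply INR_Z_to_nat_le; [|apply Rdiv_le_0_compat; [nra|lra]].
  eapply Rle_trans; [apply IZR_div_le; lia|].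
  rewrite mult_IZR, minus_IZR. apply Rmult_le_compat_r; [left; apply Rinv_0_lt_compat; lra|nra].
Qed.

Lemma b_count_le_pow2 : INR B <= 2 ^ m.
Proof.
  pose proof b_count_le. pose proof u2_le_l1. pose proof P_le_s_real_m. destruct offsets_pos as [HL1 _].
  assert (0 < IZR L1) by (apply IZR_lt; lia). assert (3 <= IZR P) by (apply IZR_le; lia).
  assert (IZR P * IZR U2 / IZR L1 <= IZR P).
  { apply div_le_of_le_mul; [lra|]. apply Rmult_le_compat_l; lra. }
  destruct m_large as (Hm & _ & Hr & _). pose proof (IZR_of_nat_le_INR 16 m Hm) as H16. simpl in H16.
  pose proof (s_real_eq m ltac:(lia)) as Heq. pose proof (s_real_pos m).
  assert (s_real m <= 2 ^ m); [|lra].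
  rewrite <- Heq. rewrite <- (Rmult_1_r (s_real m)) at 1.
  apply Rmult_le_compat_l; [lra|]. assert (1 <= c * INR m) by nra. nra.
Qed.

Lemma code_range_length_le :
  INR (length (code_range P L1 U1 L2 U2)) <= 8 * s_real m * s_real n / (c * rho n).
Proof.
  destruct offsets_pos, offsets_le. pose proof width_between. pose proof n_ge_16.
  destruct n_large as (_ & _ & Hr42 & Hrc).
  eapply Rle_trans; [apply length_code_range_le; lia|].
  apply code_count_bound_le with (2 ^ n) (INR n).
  - apply IZR_lt; lia.
  - pose proof P_le_s_real_m; lra.
  - exact s_real_m_le.
  - apply s_real_eq. destruct m_large; lia.
  - lra.
  - rewrite <- !minus_IZR. f_equal. unfold L1, U1, L2, U2. lia.
  - lra.
  - exact l1_ge.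
  - exact l2_ge.
  - exact u2_le.
  - apply pow_lt; lra.
  - exact Hr42.
  - exact Hrc.
  - exact c_ge.
  - lra.
  - exact pow2_n_ge.
  - exact b_count_le.
  - pose proof (partial_sum_harmonic_le_log2 _ _ b_count_le_pow2).
    assert (INR m + 1 <= INR n) by (rewrite <- S_INR; apply le_INR; lia). fold B. lra.
Qed.

End Offsets.

Lemma s_real_product_eq m n : (1 <= m)%nat -> (1 <= n)%nat ->
  8 * s_real m * s_real n / (c * rho n) =
  8 * 2 ^ (m + n) / (c ^ 3 * Rpower (INR n) (2 + 2 * eps) * Rpower (INR m) (1 + eps)) * INR n.
Proof.
  intros Hm Hn. pose proof (rho_between m Hm). pose proof (rho_between n Hn).
  replace (2 + 2 * eps) with ((1 + eps) + (1 + eps)) by ring.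
  unfold s_real, rho in *. rewrite pow_add, !Rpower_plus, !Rpower_1 by lra.
  field. repeat split; lra.
Qed.

End Scales.

Theorem lemma3p6 (eps c : R) :
  (0 < eps < 1)%R -> (12 / eps <= c)%R ->
  exists N0 : nat, forall (n0 : nat) (S : pt -> Prop),
    (N0 <= n0)%nat -> construction eps c n0 S ->
    exists N : nat, forall m n : nat,
      (n0 <= m)%nat -> (m < n)%nat -> (N <= n)%nat ->
      exists k : nat, card_is (pair_triple eps c S m n) k /\
        (INR k <= 8 * 2 ^ (m + n) /
           (c ^ 3 * Rpower (INR n) (2 + 2 * eps) * Rpower (INR m) (1 + eps))
           * INR n)%R.
Proof.
  intros Heps Hc.
  assert (Hc12 : 12 <= c).
  { apply Rle_trans with (12 / eps); [|exact Hc].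
    unfold Rdiv. rewrite <- (Rmult_1_r 12) at 1. apply Rmult_le_compat_l; [lra|].
    rewrite <- Rinv_1. apply Rinv_le_contravar; lra. }
  destruct (eventually_large eps c Heps Hc12) as [N HN].
  exists N. intros n0 S Hn0 [_ Hcons]. exists N. intros m n Hm Hmn Hn.
  assert (Hml : large eps c m) by (apply HN; lia).
  assert (Hnl : large eps c n) by (apply HN; lia).
  destruct (Hcons m ltac:(lia)) as (P & a & b & (HP & HPlt & HPmax) & _ & _ & _ & f & _ & HS).
  assert (HP3 : (3 <= P)%Z) by (apply HPmax; [apply prime_3|now apply s_gt_3]).
  destruct (offsets_pos eps c Heps Hc12 m n P Hml Hnl Hmn HPlt) as [HL1 HL2].
  destruct (parabola_box_triples_card_le (2 ^ Z.of_nat m) (Y_ eps m) P a b (2 ^ Z.of_nat n)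
              (2 ^ Z.of_nat n + s_ eps c n) (Y_ eps n - s_ eps c n) (Y_ eps n) HP HP3 HL1 HL2
              (pair_triple eps c S m n)) as [k [Hk Hlen]].
  { intros [[u v] w] (Huv & Su & Qu & Sv & Qv & Qw & Hcol).
    split; [exact Huv|]. split; [exact (proj1 (proj1 (HS u Qu) Su))|].
    split; [exact (proj1 (proj1 (HS v Qv) Sv))|]. split; [exact Qw|exact Hcol]. }
  exists k. split; [exact Hk|].
  rewrite <- (s_real_product_eq eps c Heps Hc12 m n) by (destruct Hml, Hnl; lia).
  eapply Rle_trans; [apply le_INR, Hlen|].
  now apply code_range_length_le.
Qed.
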